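(* Let $\mathcal F_s(\lambda_s)=\sum_{g\ge2}a_g\lambda_s^{2g-2}$ (a formal power series in $\lambda_s$). Under the standing assumptions in the context, $\mathcal F_s$ satisfies $$\theta_{\lambda_s}^2\mathcal F_s+(\theta_{\lambda_s}\mathcal F_s)^2+2\left(1-\frac{2}{3\lambda_s^2}\right)\theta_{\lambda_s}\mathcal F_s+\frac59=0,\qquad \theta_{\lambda_s}=\lambda_s\frac{\partial}{\partial\lambda_s}.$$
   Context: Setting: the polynomial formulation of the BCOV holomorphic anomaly equations on a one-dimensional slice (local coordinate $z$) of the moduli space of a Calabi–Yau threefold. $C_{zzz}$ is the holomorphic Yukawa coupling, assumed nonzero. The genus-$g$ free energies $\mathcal F^{(g)}$ ($g\ge 1$) are polynomials in the generators $S^{zz},S^z,S,K_z$ with coefficients holomorphic in $z$; for $g\ge2$, $\mathcal F^{(g)}$ has weighted degree $3g-3$ (weights $1,2,3,1$) and its term of highest degree in $S^{zz}$ is $a_g\,C_{zzz}^{2g-2}(S^{zz})^{3g-3}$, $a_g\in\mathbb Q$. The total free energy is $\mathcal F=\sum_{g\ge2}\lambda^{2g-2}\mathcal F^{(g)}$, with $\lambda$ the topological string coupling. The scaling limit: replace $S^{zz}$ by $\varepsilon^{2/3}S^{zz}$ and $\lambda$ by $\lambda/\varepsilon$ and let $\varepsilon\to0$; only the terms $a_gC_{zzz}^{2g-2}(S^{zz})^{3g-3}\lambda^{2g-2}$ survive, giving $\mathcal F_s=\sum_{g\ge2}a_g\lambda_s^{2g-2}$ with rescaled coupling $\lambda_s^2=\lambda^2C_{zzz}^2(S^{zz})^3$.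 ''l.o.t.'' means terms of lower degree in $S^{zz}$. $D_z$ is a derivation with $D_zS^{zz}=-C_{zzz}(S^{zz})^2+\text{l.o.t.}$ and $D_zC_{zzz}=3C_{zzz}^2S^{zz}+\text{l.o.t.}$; $D_z\mathcal F^{(1)}=\tfrac12C_{zzz}S^{zz}+\text{l.o.t.}$; and for $g\ge2$, $\partial\mathcal F^{(g)}/\partial S^{zz}=\frac12\sum_{h=1}^{g-1}D_z\mathcal F^{(h)}D_z\mathcal F^{(g-h)}+\frac12D_zD_z\mathcal F^{(g-1)}$. *)

From HB Require Import structures.
From mathcomp Require Import all_boot all_order all_algebra.
Set Implicit Arguments. Unset Strict Implicit. Unset Printing Implicit Defensive.
Import Order.TTheory GRing.Theory Num.Theory.
Local Open Scope ring_scope.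

(* Formal power series in lambda_s with rational coefficients:
   s n is the coefficient of lambda_s^n. *)
Definition fps := nat -> rat.

(* F_s = sum_{g>=2} a_g lambda_s^(2g-2): coefficient of lambda^n is
   a_(n/2+1) when n is even and n >= 2, and 0 otherwise. *)
Definition Fs (a : nat -> rat) : fps :=
  fun n => if odd n || (n < 2)%N then 0 else a (n./2 + 1)%N.

(* theta = lambda d/dlambda acts on lambda^n by multiplication by n. *)
Definition theta (s : fps) : fps := fun n => n%:R * s n.

Definition fps_add (s t : fps) : fps := fun n => s n + t n.
Definition fps_scale (c : rat) (s : fps) : fps := fun n => c * s n.
Definition fps_mul (s t : fps) : fps :=
  fun n => \sum_(i < n.+1) s i * t (n - i)%N.
Definition fps_const (c : rat) : fps := fun n => if n == 0%N then c else 0.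

(* Division by lambda^2 (exact when the coefficients of lambda^0 and
   lambda^1 vanish, which is the case for theta F_s). *)
Definition fps_divX2 (s : fps) : fps := fun n => s n.+2.

Definition ode_lhs (F : fps) : fps :=
  fps_add (theta (theta F))
 (fps_add (fps_mul (theta F) (theta F))
 (fps_add (fps_scale 2 (theta F))
 (fps_add (fps_scale (- (4%:R / 3%:R)) (fps_divX2 (theta F)))
          (fps_const (5%:R / 9%:R))))).

From HB Require Import structures.
From mathcomp Require Import all_boot all_order all_algebra.
From mathcomp Require Import ring zify.
Set Implicit Arguments. Unset Strict Implicit. Unset Printing Implicit Defensive.
Import Order.TTheory GRing.Theory Num.Theory.
Local Open Scope ring_scope.

(* Write X for S^zz.  In the scaling limit only the top X-degree term of each
   polynomial survives, and on top terms D is a weighted derivation: since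
   D X = -C X^2 + ... and D C = 3 C^2 X + ..., it maps C^m X^k to
   (3m - k) C^(m+1) X^(k+1).  Hence D F^(g) = b_g C^(2g-1) X^(3g-2) + ... with
   b_1 = 1/2 and b_g = (3g-3) a_g, and the top coefficient of the anomaly
   equation reads  b_g = 1/2 sum_(h<g) b_h b_(g-h) + 1/2 (3g-4) b_(g-1).
   As theta F_s = 2/3 sum_g b_g lambda^(2g-2), this recursion is, coefficient
   by coefficient, the stated equation.  Rational numbers enter B through
   ratr, which is an injective ring morphism because the positive integers
   are units of B. *)

Section LeadingTerm.
Variable R : comNzRingType.
Implicit Types (p q : {poly R}) (c : R).

(* p = c X^k + terms of degree < k; c = 0 is allowed. *)
Definition lead_term (k : nat) c p := (size (p - c *: 'X^k)%R <= k)%N.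

Lemma lead_term_coef k c p : lead_term k c p -> p`_k = c.
Proof.
move=> /(nth_default 0); rewrite coefB coefZ coefXn eqxx mulr1 => /eqP.
by rewrite subr_eq0 => /eqP.
Qed.

Lemma lead_termXn k : lead_term k 1 'X^k.
Proof. by rewrite /lead_term scale1r subrr size_poly0. Qed.

Lemma lead_termC c : lead_term 0 c c%:P.
Proof. by rewrite /lead_term expr0 alg_polyC subrr size_poly0. Qed.

Lemma lead_termD k c c1 c2 p q :
  lead_term k c1 p -> lead_term k c2 q -> c1 + c2 = c -> lead_term k c (p + q).
Proof.
rewrite /lead_term => hp hq <-.
have -> : p + q - (c1 + c2) *: 'X^k = (p - c1 *: 'X^k) + (q - c2 *: 'X^k).
  by rewrite scalerDl; ring.
by rewrite (leq_trans (size_polyD _ _)) // geq_max hp hq.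
Qed.

Lemma lead_termDr k c p q :
  lead_term k c p -> (size q <= k)%N -> lead_term k c (p + q).
Proof.
move=> hp hq; apply: lead_termD hp _ (addr0 c).
by rewrite /lead_term scale0r subr0.
Qed.

Lemma lead_termM k k1 k2 c c1 c2 p q :
  lead_term k1 c1 p -> lead_term k2 c2 q -> (k1 + k2)%N = k -> c1 * c2 = c ->
  lead_term k c (p * q).
Proof.
rewrite /lead_term => hp hq <- <-.
set r1 := p - c1 *: 'X^k1 in hp *; set r2 := q - c2 *: 'X^k2 in hq *.
have -> : p * q - (c1 * c2) *: 'X^(k1 + k2) =
    (c1 *: 'X^k1) * r2 + r1 * (c2 *: 'X^k2) + r1 * r2.
  by rewrite /r1 /r2 exprD -!mul_polyC polyCM; ring.
have size_monom c' k' : (size (c' *: 'X^k' : {poly R}) <= k'.+1)%N.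
  by rewrite (leq_trans (size_scale_leq _ _)) ?size_polyXn.
have size_mul (s t : {poly R}) m n : (size s <= m)%N -> (size t <= n)%N ->
    (size (s * t)%R <= m + n - 1)%N.
  by move=> hs ht; apply: leq_trans (size_polyMleq _ _) _; rewrite -subn1; lia.
rewrite (leq_trans (size_polyD _ _)) // geq_max.
rewrite (leq_trans (size_mul _ _ _ _ hp hq)) ?leq_subr // andbT.
rewrite (leq_trans (size_polyD _ _)) // geq_max.
rewrite (leq_trans (size_mul _ _ _ _ (size_monom c1 k1) hq)) ?addSn ?subn1 //=.
by rewrite (leq_trans (size_mul _ _ _ _ hp (size_monom c2 k2))) ?addnS ?subn1.
Qed.

Lemma lead_termZ k c s p : lead_term k c p -> lead_term k (s * c) (s *: p).
Proof.
by rewrite /lead_term -scalerA -scalerBr; apply: leq_trans (size_scale_leq _ _).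
Qed.

Lemma lead_term_deriv k c p :
  lead_term k c p -> lead_term k.-1 (c * k%:R) p^`().
Proof.
rewrite /lead_term => hp.
have -> : p^`() - (c * k%:R) *: 'X^(k.-1) = (p - c *: 'X^k)^`().
  by rewrite derivB derivZ derivXn -scaler_nat scalerA.
have [->|nz] := eqVneq (p - c *: 'X^k) 0; first by rewrite deriv0 size_poly0.
have := lt_size_deriv nz; lia.
Qed.

Lemma lead_term_sum k m n (c : nat -> R) (P : nat -> {poly R}) :
  (forall i, (m <= i < n)%N -> lead_term k (c i) (P i)) ->
  lead_term k (\sum_(m <= i < n) c i) (\sum_(m <= i < n) P i).
Proof.
move=> hP; rewrite !big_nat.
elim/big_ind2: _ => [|c1 p1 c2 p2 h1 h2|i /hP //]; last exact: lead_termD h1 h2 _.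
by rewrite /lead_term scale0r subr0 size_poly0.
Qed.

End LeadingTerm.

Section RatEmbedding.
Variable R : comUnitRingType.
Hypothesis natS_unit : forall n : nat, n.+1%:R \is a @GRing.unit R.

Lemma intr_unit (z : int) : z != 0 -> z%:~R \is a @GRing.unit R.
Proof.
case: z => [[|n]|n] // _; first exact: natS_unit.
by rewrite NegzE intrN unitrN; exact: natS_unit.
Qed.

Lemma intr_inj_unit : injective (intr : int -> R).
Proof.
move=> z1 z2 /eqP; rewrite -subr_eq0 -intrB => /eqP h.
apply/eqP; rewrite -subr_eq0; apply: contraT => /intr_unit.
by rewrite h unitr0.
Qed.

Lemma denq_unit (q : rat) : (denq q)%:~R \is a @GRing.unit R.
Proof. exact/intr_unit/denq_neq0. Qed.

Lemma ratr_mulz (q : rat) (n m : int) :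
  q * n%:~R = m%:~R -> ratr q * n%:~R = m%:~R :> R.
Proof.
move=> hq; rewrite /ratr mulrAC; apply: (canLR (mulrK (denq_unit q))).
rewrite -!intrM; congr _%:~R; apply: (@intr_inj rat).
by rewrite !intrM numqE -hq; ring.
Qed.

Lemma ratr_denq (q : rat) : ratr q * (denq q)%:~R = (numq q)%:~R :> R.
Proof. exact/ratr_mulz/esym/numqE. Qed.

Lemma ratrD (q1 q2 : rat) : ratr (q1 + q2) = ratr q1 + ratr q2 :> R.
Proof.
pose d := denq q1 * denq q2.
have d_unit : d%:~R \is a @GRing.unit R by rewrite intrM unitrM !denq_unit.
apply: (mulIr d_unit).
rewrite (@ratr_mulz _ _ (numq q1 * denq q2 + numq q2 * denq q1)).
  by rewrite !(intrD, intrM) -!ratr_denq; ring.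
by rewrite !(intrD, intrM) !numqE; ring.
Qed.

Lemma ratrM (q1 q2 : rat) : ratr (q1 * q2) = ratr q1 * ratr q2 :> R.
Proof.
pose d := denq q1 * denq q2.
have d_unit : d%:~R \is a @GRing.unit R by rewrite intrM unitrM !denq_unit.
apply: (mulIr d_unit).
rewrite (@ratr_mulz _ _ (numq q1 * numq q2)).
  by rewrite !intrM -!ratr_denq; ring.
by rewrite !intrM !numqE; ring.
Qed.

Lemma ratr_inj : injective (ratr : rat -> R).
Proof.
move=> q1 q2 h; apply/eqP; rewrite rat_eq; apply/eqP/intr_inj_unit.
by rewrite !intrM -!ratr_denq h; ring.
Qed.

End RatEmbedding.

Section Derivation.
Variable B : idomainType.
Hypothesis natS_unit : forall n : nat, n.+1%:R \is a @GRing.unit B.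
Variable C : B.
Variable D : {poly B} -> {poly B}.
Hypothesis D_add : forall p q, D (p + q) = D p + D q.
Hypothesis D_mul : forall p q, D (p * q) = D p * q + p * D q.
Hypothesis size_DC : forall b : B, (size (D b%:P) <= 2)%N.
Hypothesis DX : (size (D 'X + C *: 'X^2)%R <= 2)%N.
Hypothesis DC : (size (D C%:P - (3%:R * C ^+ 2) *: 'X)%R <= 1)%N.

Lemma D0 : D 0 = 0.
Proof. by apply: (addrI (D 0)); rewrite -D_add !addr0. Qed.

Lemma D1 : D 1 = 0.
Proof.
have := D_mul 1 1; rewrite !mulr1 mul1r => h.
by apply: (addrI (D 1)); rewrite -h addr0.
Qed.

Lemma DN p : D (- p) = - D p.
Proof. by apply: (addrI (D p)); rewrite -D_add !subrr D0. Qed.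

Lemma D_int (z : int) : D z%:~R = 0.
Proof.
have D_nat n : D n%:R = 0 by elim: n => [|n IH]; rewrite ?D0 // -natr1 D_add IH D1 addr0.
by case: z => n; rewrite ?NegzE ?intrN ?DN D_nat ?oppr0.
Qed.

Lemma D_ratr (q : rat) : D (ratr q)%:P = 0.
Proof.
have d_neq0 : (denq q)%:~R != 0 :> {poly B}.
  rewrite -(rmorph_int polyC) polyC_eq0.
  by apply: contraTneq (denq_unit natS_unit q) => ->; rewrite unitr0.
have : D ((ratr q)%:P * ((denq q)%:~R)%:P) = 0.
  by rewrite -polyCM ratr_denq // rmorph_int D_int.
rewrite D_mul rmorph_int D_int mulr0 addr0 => /eqP.
by rewrite mulf_eq0 (negPf d_neq0) orbF => /eqP.
Qed.

Lemma size_DX : (size (D 'X) <= 3)%N.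
Proof.
rewrite -[D 'X](addrK (C *: 'X^2)) (leq_trans (size_polyD _ _)) // geq_max.
by rewrite (leq_trans DX) // size_polyN (leq_trans (size_scale_leq _ _)) ?size_polyXn.
Qed.

Lemma size_D p : (size (D p) <= (size p).+1)%N.
Proof.
elim/poly_ind: p => [|p c IH]; first by rewrite D0 size_poly0.
rewrite size_MXaddC; case: ifP => [/andP [/eqP -> /eqP ->]|_].
  by rewrite mul0r add0r D0 size_poly0.
rewrite D_add D_mul.
have hpX : (size (D p * 'X)%R <= (size p).+2)%N.
  by have := size_polyMleq (D p) 'X; rewrite size_polyX -subn1; lia.
have hXp : (size (p * D 'X)%R <= (size p).+2)%N.
  by have := size_DX; have := size_polyMleq p (D 'X); rewrite -subn1; lia.
rewrite (leq_trans (size_polyD _ _)) // geq_max (leq_trans (size_DC c)) // andbT.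
by rewrite (leq_trans (size_polyD _ _)) // geq_max hpX hXp.
Qed.

Lemma lead_term_DXn k : lead_term k.+1 (- (k%:R * C)) (D 'X^k).
Proof.
elim: k => [|k IH]; first by rewrite D1 /lead_term mul0r oppr0 scale0r subr0 size_poly0.
have lead_DX : lead_term 2 (- C) (D 'X) by rewrite /lead_term scaleNr opprK.
rewrite exprSr D_mul; apply: lead_termD.
- exact: lead_termM IH (lead_termXn _ 1) (addn1 _) (erefl _).
- exact: lead_termM (lead_termXn _ k) lead_DX (addn2 _) (erefl _).
- by rewrite -natr1; ring.
Qed.

Lemma lead_term_DCn m : lead_term 1 (3%:R * m%:R * C ^+ m.+1) (D (C ^+ m)%:P).
Proof.
elim: m => [|m IH]; first by rewrite D1 /lead_term !mulr0 mul0r scale0r subr0 size_poly0.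
rewrite [C ^+ m.+1]exprSr polyCM D_mul; apply: lead_termD.
- exact: lead_termM IH (lead_termC C) (addn0 _) (erefl _).
- exact: lead_termM (lead_termC _) (DC : lead_term 1 _ _) (add0n _) (erefl _).
- by rewrite -natr1 !exprS; ring.
Qed.

Lemma lead_term_D c m k p : D c%:P = 0 -> (k <= 3 * m)%N ->
  lead_term k (c * C ^+ m) p -> lead_term k.+1 (c * (3 * m - k)%:R * C ^+ m.+1) (D p).
Proof.
move=> Dc k_le hp.
rewrite -[p](subrK ((c * C ^+ m) *: 'X^k)) D_add addrC.
apply: lead_termDr; last by apply: leq_trans (size_D _) _; exact: hp.
rewrite -mul_polyC polyCM !D_mul Dc mul0r add0r; apply: lead_termD.
- exact: lead_termM (lead_termM (lead_termC _) (lead_term_DCn m) _ _) (lead_termXn _ k) _ _.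
- exact: lead_termM (lead_termM (lead_termC _) (lead_termC _) _ _) (lead_term_DXn k) _ _.
- by rewrite natrB // natrM exprS; ring.
Qed.

End Derivation.

Definition even_fps (s : fps) := forall n, odd n -> s n = 0.

Lemma fps_mul_odd (s t : fps) n :
  even_fps s -> even_fps t -> odd n -> fps_mul s t n = 0.
Proof.
move=> es et n_odd; apply: big1 => i _.
have [i_odd|i_even] := boolP (odd i); first by rewrite es // mul0r.
rewrite et ?mulr0 // oddB ?(negPf i_even) ?addbF //.
by rewrite -ltnS ltn_ord.
Qed.

Lemma sum_even_terms (V : nmodType) (f : nat -> V) m :
  (forall i, odd i -> f i = 0) ->
  \sum_(i < (2 * m).+1) f i = \sum_(l < m.+1) f (2 * l)%N.
Proof.
move=> f_odd; elim: m => [|m IH]; first by rewrite !big_ord1.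
rewrite [RHS]big_ord_recr -IH (_ : (2 * m.+1).+1 = (2 * m).+3)%N; last by lia.
rewrite 2!big_ord_recr /= f_odd ?addr0; last by rewrite /= oddM.
by rewrite mulnS.
Qed.

Lemma fps_mul_even (s t : fps) j : even_fps s ->
  fps_mul s t (2 * j) = \sum_(l < j.+1) s (2 * l)%N * t (2 * (j - l))%N.
Proof.
move=> es; rewrite /fps_mul (@sum_even_terms _ (fun i => s i * t (2 * j - i)%N)).
  by apply: eq_bigr => l _; rewrite mulnBr.
by move=> i /es ->; rewrite mul0r.
Qed.

(* b_g of the header: D F^(g) = b_g C^(2g-1) X^(3g-2) + lower-order terms. *)
Definition DF_lead (a : nat -> rat) (g : nat) : rat :=
  if g == 1%N then 1 / 2%:R else a g * (3 * g - 3)%:R.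

Section ThetaFs.
Variable a : nat -> rat.
Let u := theta (Fs a).

Lemma theta_Fs_even_fps : even_fps u.
Proof. by move=> n n_odd; rewrite /u /theta /Fs n_odd mulr0. Qed.

Lemma theta_Fs0 : u 0 = 0.
Proof. by rewrite /u /theta mul0r. Qed.

Lemma theta_FsE l : u (2 * l.+1) = 2%:R / 3%:R * DF_lead a l.+2.
Proof.
rewrite /u /theta /Fs /DF_lead oddM /= ifF; last by lia.
rewrite (_ : ((2 * l.+1)./2 + 1 = l.+2)%N); last by rewrite mul2n doubleK addn1.
rewrite (_ : (3 * l.+2 - 3 = 3 * l.+1)%N); last by lia.
by rewrite !natrM; field.
Qed.

Lemma theta_Fs_sqrE k : fps_mul u u (2 * k.+1) =
  4%:R / 9%:R * \sum_(i < k) DF_lead a i.+2 * DF_lead a (k.+1 - i)%N.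
Proof.
rewrite fps_mul_even; last exact: theta_Fs_even_fps.
rewrite big_ord_recl big_ord_recr /= muln0 subnn theta_Fs0 mul0r mulr0 add0r addr0.
rewrite mulr_sumr; apply: eq_bigr => i _; rewrite /bump /= add1n.
have i_lt := ltn_ord i.
rewrite (_ : (2 * (k.+1 - i.+1) = 2 * (k - i.+1).+1)%N); last by lia.
rewrite !theta_FsE (_ : ((k - i.+1).+2 = k.+1 - i)%N); last by lia.
by field.
Qed.

End ThetaFs.

Lemma ode_lhs_Fs_eq0 (a : nat -> rat) :
  (forall g, (2 <= g)%N -> DF_lead a g =
     1 / 2%:R * (\sum_(1 <= h < g) DF_lead a h * DF_lead a (g - h)%N)
     + 1 / 2%:R * (DF_lead a g.-1 * (3 * g - 4)%:R)) ->
  forall n, ode_lhs (Fs a) n = 0.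
Proof.
move=> rec n; rewrite /ode_lhs /fps_add /fps_scale /fps_divX2 /fps_const.
have eu := theta_Fs_even_fps a; have u0 := theta_Fs0 a; have uE := theta_FsE a.
rewrite [theta (theta _) n]/theta; set u := theta (Fs a) in eu u0 uE *.
set b := DF_lead a in rec uE *; have b1 : b 1%N = 1 / 2%:R by [].
have [n_odd|n_even] := boolP (odd n).
  have n_neq0 : (n == 0%N) = false by case: n n_odd.
  rewrite fps_mul_odd // !eu ?n_neq0 /= ?negbK //.
  by rewrite !(mulr0, addr0).
have -> : n = (2 * n./2)%N by rewrite -[LHS]odd_double_half (negPf n_even) mul2n.
case: n./2 => [|k].
  rewrite (fps_mul_even u 0 eu) big_ord1 /= u0 (uE 0%N) (rec 2%N) // big_nat1 b1.
  by rewrite !mulr0 !add0r (_ : (3 * 2 - 4 = 2)%N) //; field.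
have := rec k.+3 isT.
rewrite big_add1 /= big_mkord big_ord_recl big_ord_recr /=.
have -> : (3 * k.+3 - 4 = 3 * k + 5)%N by lia.
rewrite /bump /= !subSS subn0 subSnn b1.
rewrite (eq_bigr (fun i : 'I_k => b i.+2 * b (k.+1 - i)%N)) => [rec3|i _]; last first.
  by rewrite add1n !subSS.
have -> : ((2 * k.+1).+2 = 2 * k.+2)%N by lia.
rewrite theta_Fs_sqrE (uE k) (uE k.+1) rec3 add1n; move: (b k.+2) (\sum_(i < k) _) => X M.
by rewrite !natrM natrD -natr1; field.
Qed.

Section Anomaly.
Variable B : idomainType.
Hypothesis natS_unit : forall n : nat, n.+1%:R \is a @GRing.unit B.
Variable C : B.
Hypothesis C_neq0 : C != 0.
Variable D : {poly B} -> {poly B}.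
Hypothesis D_add : forall p q, D (p + q) = D p + D q.
Hypothesis D_mul : forall p q, D (p * q) = D p * q + p * D q.
Hypothesis size_DC : forall b : B, (size (D b%:P) <= 2)%N.
Hypothesis DX : (size (D 'X + C *: 'X^2)%R <= 2)%N.
Hypothesis DC : (size (D C%:P - (3%:R * C ^+ 2) *: 'X)%R <= 1)%N.
Variable F : nat -> {poly B}.
Variable a : nat -> rat.
Hypothesis DF1 : (size (D (F 1%N) - (ratr (1 / 2%:R) * C) *: 'X)%R <= 1)%N.
Hypothesis F_lead : forall g : nat, (2 <= g)%N ->
  (size (F g - (ratr (a g) * C ^+ (2 * g - 2)%N) *: 'X^(3 * g - 3)%N)%R
     <= 3 * g - 3)%N.
Hypothesis anomaly : forall g : nat, (2 <= g)%N ->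
  (F g)^`() =
    ratr (1 / 2%:R) *: (\sum_(1 <= h < g) D (F h) * D (F (g - h)%N))
    + ratr (1 / 2%:R) *: D (D (F g.-1)).

Let lead_D := lead_term_D D_add D_mul size_DC DX DC.
Let D_const := D_ratr natS_unit D_add D_mul.

Lemma lead_term_DF g : (1 <= g)%N ->
  lead_term (3 * g - 2) (ratr (DF_lead a g) * C ^+ (2 * g - 1)) (D (F g)).
Proof.
case: (ltngtP g 1) => // [g_gt1|->] _; last by rewrite /= expr1.
have := lead_D (D_const (a g)) _ (F_lead g_gt1).
have -> : (3 * (2 * g - 2) - (3 * g - 3) = 3 * g - 3)%N by lia.
have -> : ((3 * g - 3).+1 = 3 * g - 2)%N by lia.
have -> : ((2 * g - 2).+1 = 2 * g - 1)%N by lia.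
by rewrite /DF_lead gtn_eqF // ratrM // ratr_nat; apply; lia.
Qed.

Lemma DF_lead_rec g : (2 <= g)%N -> DF_lead a g =
  1 / 2%:R * (\sum_(1 <= h < g) DF_lead a h * DF_lead a (g - h)%N)
  + 1 / 2%:R * (DF_lead a g.-1 * (3 * g - 4)%:R).
Proof.
move=> g_ge2; set b := DF_lead a; set e := (2 * g - 2)%N.
have ratr0 : ratr 0 = 0 :> B := ratr_int _ 0.
have ratr_sum := big_morph _ (ratrD natS_unit) ratr0.
have lhs : lead_term (3 * g - 4) (ratr (b g) * C ^+ e) (F g)^`().
  have := lead_term_deriv (F_lead g_ge2).
  have -> : ((3 * g - 3).-1 = 3 * g - 4)%N by lia.
  by rewrite /b /DF_lead gtn_eqF // ratrM // ratr_nat mulrAC.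
have rhs : lead_term (3 * g - 4)
    (ratr (1 / 2%:R * (\sum_(1 <= h < g) b h * b (g - h)%N)
           + 1 / 2%:R * (b g.-1 * (3 * g - 4)%:R)) * C ^+ e) (F g)^`().
  rewrite anomaly //; apply: lead_termD; [apply: lead_termZ|apply: lead_termZ|].
  - apply: lead_term_sum => h /andP [h_ge1 h_lt].
    by apply: lead_termM (lead_term_DF h_ge1) (lead_term_DF _) _ (erefl _); lia.
  - have DF_pred : lead_term (3 * g.-1 - 2) (ratr (b g.-1) * C ^+ (2 * g.-1 - 1))
        (D (F g.-1)) by apply: lead_term_DF; lia.
    have := lead_D (D_const (b g.-1)) _ DF_pred.
    have -> : ((3 * g.-1 - 2).+1 = 3 * g - 4)%N by lia.
    by apply; lia.
  have -> : (3 * (2 * g.-1 - 1) - (3 * g.-1 - 2) = 3 * g - 4)%N by lia.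
  have -> : ((2 * g.-1 - 1).+1 = e)%N by rewrite /e; lia.
  have -> : \sum_(1 <= h < g) ratr (b h) * C ^+ (2 * h - 1) *
      (ratr (b (g - h)%N) * C ^+ (2 * (g - h) - 1)) =
      ratr (\sum_(1 <= h < g) b h * b (g - h)%N) * C ^+ e.
    rewrite ratr_sum mulr_suml; apply: eq_big_nat => h /andP [h_ge1 h_lt].
    rewrite ratrM // /e (_ : (2 * g - 2 = (2 * h - 1) + (2 * (g - h) - 1))%N).
      by rewrite exprD; ring.
    lia.
  have ratr1 : ratr 1 = 1 :> B := ratr_int _ 1.
  by rewrite ratrD // !ratrM // ratr_nat !ratr1; ring.
apply: (ratr_inj natS_unit); apply: (mulIf (expf_neq0 e C_neq0)).
by rewrite -(lead_term_coef lhs) (lead_term_coef rhs).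
Qed.
End Anomaly.

Theorem mainTheorem2
  (B : idomainType)
  (Hunit : forall n : nat, (n.+1)%:R \is a @GRing.unit B)
  (C : B) (HC : C != 0)
  (D : {poly B} -> {poly B})
  (HDadd : forall p q, D (p + q) = D p + D q)
  (HDmul : forall p q, D (p * q) = D p * q + p * D q)
  (HDconst : forall b : B, (size (D b%:P)%R <= 2)%N)
  (HDX : (size (D 'X + C *: 'X^2)%R <= 2)%N)
  (HDC : (size (D C%:P - (3%:R * C ^+ 2) *: 'X)%R <= 1)%N)
  (F : nat -> {poly B})
  (a : nat -> rat)
  (HF1 : (size (D (F 1%N) - (ratr (1 / 2%:R) * C) *: 'X)%R <= 1)%N)
  (Hlead : forall g : nat, (2 <= g)%N ->
     (size (F g - (ratr (a g) * C ^+ (2 * g - 2)%N) *: 'X^(3 * g - 3)%N)%R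
        <= 3 * g - 3)%N)
  (Hanom : forall g : nat, (2 <= g)%N ->
     (F g)^`() =
       ratr (1 / 2%:R) *: (\sum_(1 <= h < g) D (F h) * D (F (g - h)%N))
       + ratr (1 / 2%:R) *: D (D (F g.-1))) :
  forall n : nat, ode_lhs (Fs a) n = 0.
Proof.
exact: ode_lhs_Fs_eq0 (DF_lead_rec Hunit HC HDadd HDmul HDconst HDX HDC HF1 Hlead Hanom).
Qed.
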